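(* For each $j=1,\dots,m$ there exists $A_j>0$ such that for all $t>0$ and all $N\ge1$, \[\frac{a_j^N(NX_N(t))}{N}\le A_j\quad\text{a.s.}\]
   Context: Fix integers $n,m\ge1$, vectors $\nu_1,\dots,\nu_m\in\mathbb{Z}^n$ and $c=(c_1,\dots,c_m)$ with all $c_j>0$; $|\cdot|$ is a fixed norm. For each $N\ge1$ and $j$, $a_j^N(x)=c_jb_j^N(x)$ with $b_j^N:\mathbb{R}^n\to\mathbb{R}$ nonnegative on $\mathbb{Z}_+^n$. Standing assumptions: (i) for each $j$ and $x\in\mathbb{R}_+^n$ the limit $a_j(x)=\lim_Na_j^N(Nx)/N$ exists, and for each compact $K\subset\mathbb{R}_+^n$ there is $B_K>0$ with $|a_j^N(Nx)/N-a_j(x)|\le B_K/N$ for $x\in K$, $N\ge1$, all $j$; (ii) each $a_j$ is continuously differentiable on $\mathbb{R}^n$; (iii) $x_0\in\mathbb{R}_+^n$ is fixed, $N$ ranges over positive integers with $Nx_0\in\mathbb{Z}_+^n$, and on a probability space with independent unit-rate Poisson processes $Y_1,\dots,Y_m$, $X^N$ solves $X^N(t)=Nx_0+\sum_jY_j\big(\int_0^ta_j^N(X^N(s))ds\big)\nu_j$; (iv) with $X_N(t)=X^N(t)/N$, there is $\Gamma$ with $|X_N(t)|\le\Gamma$ a.s. for all $t\ge0$, $N$. *)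

From HB Require Import structures.
From mathcomp Require Import all_boot all_order all_algebra.
From mathcomp Require Import all_classical all_reals all_analysis.
Set Implicit Arguments. Unset Strict Implicit. Unset Printing Implicit Defensive.
Import Order.TTheory GRing.Theory Num.Theory.
Import numFieldNormedType.Exports.
Local Open Scope classical_set_scope.
Local Open Scope ring_scope.

(* Points of R^n are row vectors 'rV[R]_n; coordinate i of v is v ord0 i. *)

Definition nonneg_vec (R : realType) (n : nat) (v : 'rV[R]_n) : Prop :=
  forall i : 'I_n, 0 <= v ord0 i.

Definition natvec (R : realType) (n : nat) (v : 'rV[R]_n) : Prop :=
  forall i : 'I_n, exists k : nat, v ord0 i = k%:R.

Definition is_norm (R : realType) (n : nat) (nrm : 'rV[R]_n -> R) : Prop :=
  [/\ forall v, 0 <= nrm v,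
      forall v, nrm v = 0 -> v = 0,
      forall (a : R) v, nrm (a *: v) = `|a| * nrm v
    & forall u v, nrm (u + v) <= nrm u + nrm v].

(* continuously differentiable on R^n: differentiable everywhere and the
   differential depends continuously on the point (in finite dimension,
   continuity of x |-> 'd f x v for every direction v). *)
Definition C1 (R : realType) (n : nat) (f : 'rV[R]_n -> R) : Prop :=
  (forall x, differentiable f x) /\
  (forall v : 'rV[R]_n, continuous (fun x => 'd f x v)).

Definition unit_poisson_process (d : measure_display) (Omega : measurableType d)
    (R : realType) (P : probability Omega R) (Y : Omega -> R -> nat) : Prop :=
  (forall t (k : nat), measurable [set w | Y w t = k]) /\
  [/\ (forall w, Y w 0 = 0%N),
      (forall w s t, 0 <= s -> s <= t -> (Y w s <= Y w t)%N),
      (forall w t, 0 <= t -> exists2 e : R, 0 < e &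
          forall s, t <= s -> s < t + e -> Y w s = Y w t),
      (forall s t (k : nat), 0 <= s -> s <= t ->
         P [set w | subn (Y w t) (Y w s) = k] =
           (expR (- (t - s)) * (t - s) ^+ k / (k`!)%:R)%:E)
    &
      (forall (ts : seq R) (ks : seq nat), 0 <= head (0%R : R) ts ->
         sorted <%R ts -> size ks = (size ts).-1 ->
         P (\bigcap_(i in [set i | (i < (size ts).-1)%N])
              [set w | subn (Y w (nth (0%R : R) ts i.+1)) (Y w (nth (0%R : R) ts i)) = nth 0%N ks i])
         = (\prod_(i < (size ts).-1)
              P [set w | subn (Y w (nth (0%R : R) ts i.+1)) (Y w (nth (0%R : R) ts i)) = nth 0%N ks i])%E)].

(* Mutual independence of the processes Y_1, ..., Y_m: product rule for
   finite-dimensional cylinder events (a pi-system generating the sigma-algebras). *)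
Definition indep_processes (d : measure_display) (Omega : measurableType d)
    (R : realType) (P : probability Omega R) (m : nat)
    (Y : 'I_m -> Omega -> R -> nat) : Prop :=
  forall F : 'I_m -> seq (R * set nat),
    P (\bigcap_(j in [set: 'I_m])
         \bigcap_(p in [set p | p \in F j]) [set w | Y j w p.1 \in p.2])
    = (\prod_(j < m)
         P (\bigcap_(p in [set p | p \in F j]) [set w | Y j w p.1 \in p.2]))%E.

From HB Require Import structures.
From mathcomp Require Import all_boot all_order all_algebra.
From mathcomp Require Import all_classical all_reals all_analysis.
From mathcomp Require Import lra.
Set Implicit Arguments. Unset Strict Implicit. Unset Printing Implicit Defensive.
Import Order.TTheory GRing.Theory Num.Theory.
Import numFieldNormedType.Exports.
Local Open Scope classical_set_scope.
Local Open Scope ring_scope.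

(* Almost surely the rescaled state X_N(t)/N lies in the set K of nonnegative
   vectors of norm at most Gamma, which is compact since all norms on R^n are
   equivalent. The limit rate a_j is continuous, hence bounded on K by some M,
   and the uniform approximation (i) on K gives a_j^N(N x)/N <= M + B/N <= M + B
   for every x in K. *)

Lemma continuous_compact_ub (T : topologicalType) (R : realType)
    (f : T -> R) (A : set T) :
  compact A -> {within A, continuous f} -> exists M, forall x, A x -> f x <= M.
Proof.
move=> cA cf; have [M [_ HM]] := compact_bounded (continuous_compact cf cA).
exists (M + 1) => x Ax; apply: le_trans (ler_norm _) _.
by apply: HM; [rewrite ltrDl | exists x].
Qed.

Lemma C1_continuous (R : realType) n (f : 'rV[R]_n -> R) : C1 f -> continuous f.
Proof. by move=> [df _] x; exact: differentiable_continuous. Qed.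

Section Norms.
Variables (R : realType) (n : nat).

Lemma row_coord_norm_le (v : 'rV[R]_n) i : `|v ord0 i| <= `|v|.
Proof.
have /mapP[j _ ->] : `|v ord0 i| \in [seq `|v x.1 x.2| | x : 'I_1 * 'I_n].
  by apply/mapP; exists (ord0, i) => //=; rewrite mem_enum.
have -> : `|v| = mx_norm v by [].
by rewrite mx_normrE; apply/bigmax_geP; right => /=; exists j.
Qed.

Lemma natvec_scale_nonneg (v : 'rV[R]_n) (N : nat) :
  natvec v -> nonneg_vec (N%:R^-1 *: v).
Proof.
by move=> vN i; rewrite mxE; have [k ->] := vN i; rewrite mulr_ge0 ?invr_ge0.
Qed.

Lemma closed_nonneg_vec : closed [set v : 'rV[R]_n | nonneg_vec v].
Proof.
have -> : [set v : 'rV[R]_n | nonneg_vec v] = \bigcap_(i in [set: 'I_n])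
    ((fun v : 'rV[R]_n => v ord0 i) @^-1` [set y | 0 <= y]).
  by apply/seteqP; split => v /= h i *; apply: h.
apply: closed_bigI => i _; apply: (proj1 (continuous_closedP _)).
- exact: coord_continuous.
- exact: closed_ge.
Qed.

Variable nrm : 'rV[R]_n -> R.
Hypothesis nrmP : is_norm nrm.

Lemma is_normN v : nrm (- v) = nrm v.
Proof.
by case: nrmP => _ _ nZ _; rewrite -scaleN1r nZ normrN normr1 mul1r.
Qed.

Lemma is_norm_dist u v : `|nrm u - nrm v| <= nrm (u - v).
Proof.
case: nrmP => _ _ _ nD; rewrite ler_norml; apply/andP; split.
- by have := nD (v - u) u; rewrite subrK -opprB is_normN; lra.
- by have := nD (u - v) v; rewrite subrK; lra.
Qed.

Lemma is_norm_le_sup v :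
  nrm v <= (\sum_(i < n) nrm (delta_mx ord0 i)) * `|v|.
Proof.
case: nrmP => n0 _ nZ nD; rewrite {1}(row_sum_delta v) mulr_suml.
elim: (index_enum _) => [|i s IH].
  by rewrite !big_nil -(scale0r (0 : 'rV[R]_n)) nZ normr0 mul0r.
rewrite !big_cons; apply: le_trans (nD _ _) _; apply: lerD => //.
by rewrite nZ mulrC; apply: ler_wpM2l; [exact: n0 | exact: row_coord_norm_le].
Qed.

Lemma is_norm_continuous : continuous nrm.
Proof.
set C := \sum_(i < n) nrm (delta_mx ord0 i).
have C0 : 0 <= C by apply: sumr_ge0 => i _; case: nrmP.
move=> x s /= /(nbhs_ballP (nrm x)) [e e0 es].
apply/nbhs_ballP; exists (e / (C + 1)); first by apply: divr_gt0 => //; lra.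
move=> y; rewrite -ball_normE /= => xy; apply: es; rewrite -ball_normE /=.
apply: le_lt_trans (is_norm_dist x y) _; apply: le_lt_trans (is_norm_le_sup _) _.
rewrite -/C.
apply: le_lt_trans (_ : (C + 1) * `|x - y| < _); last first.
  by rewrite mulrC -ltr_pdivlMr //; lra.
by apply: ler_wpM2r => //; lra.
Qed.

(* The minimum of nrm on the unit sphere of the sup norm gives the constant. *)
Lemma is_norm_dominates_sup : exists2 k, 0 < k & forall v, `|v| <= k * nrm v.
Proof.
have [n0 n1 nZ _] := nrmP.
have unit_scale (v : 'rV[R]_n) : v != 0 -> `| `|v|^-1 *: v | = 1.
  by move=> v0; rewrite normrZ ger0_norm ?invr_ge0 // mulVf // normr_eq0.
have [[v0 v00]|all0] := pselect (exists v : 'rV[R]_n, v != 0); last first.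
  exists 1 => // v; suff -> : v = 0 by rewrite normr0 mul1r.
  by apply/eqP; apply: contra_notT all0 => v0; exists v.
pose S := [set v : 'rV[R]_n | `|v| = 1].
have cS : compact S.
  apply: bounded_closed_compact.
    by exists 1; split => [|M M1 x /= ->]; [rewrite num_real | lra].
  rewrite (_ : S = (fun v : 'rV[R]_n => `|v|) @^-1` [set 1]) //.
  by apply: (proj1 (continuous_closedP _)); [exact: norm_continuous | exact: closed_eq].
have [u /set_mem /= u1 umin] := EVT_min_rV (ex_intro _ _ (unit_scale v0 v00)) cS
  (continuous_subspaceT is_norm_continuous).
have u_gt0 : 0 < nrm u.
  by rewrite lt0r n0 andbT; apply/eqP => /n1 u0; move: u1; rewrite u0 /S /= normr0; lra.
exists (nrm u)^-1; first by rewrite invr_gt0.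
move=> v; have [->|vn0] := eqVneq v 0; first by rewrite normr0 mulr_ge0 // invr_ge0 ltW.
have := umin _ (mem_set (unit_scale v vn0)); rewrite nZ ger0_norm ?invr_ge0 //.
have v_gt0 : 0 < `|v| by rewrite normr_gt0.
by rewrite mulrC ler_pdivlMr // [_^-1 * _]mulrC ler_pdivlMr //; nra.
Qed.

Lemma compact_nonneg_nrm_le (Gamma : R) :
  compact [set v : 'rV[R]_n | nonneg_vec v /\ nrm v <= Gamma].
Proof.
have [k k0 domk] := is_norm_dominates_sup.
apply: bounded_closed_compact.
  exists (k * Gamma); split => [|M M_gt x /= [_ xG]]; first by rewrite num_real.
  by apply: le_trans (domk x) _; apply: le_trans (ltW M_gt); apply: ler_wpM2l => //; exact: ltW.
apply: (@closedI _ [set v | nonneg_vec v] (nrm @^-1` [set y | y <= Gamma])).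
  exact: closed_nonneg_vec.
by apply: (proj1 (continuous_closedP _)); [exact: is_norm_continuous | exact: closed_le].
Qed.

End Norms.

Lemma scaled_rate_ub (R : realType) n (aN : nat -> 'rV[R]_n -> R)
    (a : 'rV[R]_n -> R) (K : set 'rV[R]_n) (B : R) :
  compact K -> continuous a -> 0 < B ->
  (forall x N, K x -> (1 <= N)%N -> `|aN N (N%:R *: x) / N%:R - a x| <= B / N%:R) ->
  exists2 A, 0 < A & forall x N, K x -> (1 <= N)%N -> aN N (N%:R *: x) / N%:R <= A.
Proof.
move=> cK ca B0 approx.
have [M aM] := continuous_compact_ub cK (continuous_subspaceT ca).
exists (`|M| + B + 1) => [|x N Kx N1]; first by have := normr_ge0 M; lra.
have := approx x N Kx N1; rewrite ler_norml => /andP[_ close].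
have BN : B / N%:R <= B.
  by rewrite ler_pdivrMr ?ltr0n //; apply: ler_peMr; [exact: ltW | rewrite ler1n].
by have := aM x Kx; have := ler_norm M; lra.
Qed.

Theorem lemma3p1 (R : realType) (n m : nat)
    (nu : 'I_m -> 'rV[int]_n) (c : 'I_m -> R)
    (nrm : 'rV[R]_n -> R)
    (b : nat -> 'I_m -> 'rV[R]_n -> R)
    (a : 'I_m -> 'rV[R]_n -> R)
    (x0 : 'rV[R]_n)
    (d : measure_display) (Omega : measurableType d) (P : probability Omega R)
    (Y : 'I_m -> Omega -> R -> nat)
    (X : nat -> Omega -> R -> 'rV[R]_n) :
  let aN := fun (N : nat) (j : 'I_m) (x : 'rV[R]_n) => c j * b N j x in
  let admissible := fun N : nat => (1 <= N)%N /\ natvec (N%:R *: x0) in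
  is_norm nrm ->
  (forall j, 0 < c j) ->
  (forall N j x, natvec x -> 0 <= b N j x) ->
  (* (i) *)
  (forall j x, nonneg_vec x ->
     (fun N : nat => aN N j (N%:R *: x) / N%:R) @ \oo --> a j x) ->
  (forall K : set 'rV[R]_n, compact K -> K `<=` [set x | nonneg_vec x] ->
     exists2 B : R, 0 < B & forall j x N, K x -> (1 <= N)%N ->
       `| aN N j (N%:R *: x) / N%:R - a j x | <= B / N%:R) ->
  (* (ii) *)
  (forall j, C1 (a j)) ->
  (* (iii) *)
  nonneg_vec x0 ->
  (forall j, unit_poisson_process P (Y j)) ->
  indep_processes P Y ->
  (forall N, admissible N -> forall w t, 0 <= t ->
     (forall j, lebesgue_measure.-integrable `[0, t]
        (fun s => (aN N j (X N w s))%:E)) /\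
     X N w t = N%:R *: x0 +
       \sum_(j < m) (Y j w (Rintegral lebesgue_measure `[0, t]
                              (fun s => aN N j (X N w s))))%:R
                    *: map_mx intr (nu j)) ->
  (* the process lives in the state space Z_+^n *)
  (forall N, admissible N -> forall t, 0 <= t ->
     {ae P, forall w, natvec (X N w t)}) ->
  (* (iv) *)
  (exists Gamma : R, forall N, admissible N -> forall t, 0 <= t ->
     {ae P, forall w, nrm (N%:R^-1 *: X N w t) <= Gamma}) ->
  (* conclusion *)
  forall j : 'I_m, exists2 A : R, 0 < A &
    forall t : R, 0 < t -> forall N : nat, admissible N ->
      {ae P, forall w, aN N j (N%:R *: (N%:R^-1 *: X N w t)) / N%:R <= A}.
Proof.
move=> aN adm nrmP _ _ _ uniform_approx a_C1 _ _ _ _ X_nat [Gamma X_bdd] j.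
pose K := [set v : 'rV[R]_n | nonneg_vec v /\ nrm v <= Gamma].
have cK : compact K by exact: compact_nonneg_nrm_le.
have [B B0 approx] := uniform_approx K cK (fun v Kv => proj1 Kv).
have [A A0 rate_ub] :=
  scaled_rate_ub (aN := aN^~ j) cK (C1_continuous (a_C1 j)) B0 (approx j).
exists A => // t t0 N admN.
apply: filterS2 (X_nat N admN t (ltW t0)) (X_bdd N admN t (ltW t0)) => w Xnat Xbdd.
by apply: rate_ub (proj1 admN); split => //; exact: natvec_scale_nonneg.
Qed.
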